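(* Let $Y$ be a sofic shift and $(G,\mathcal L)$ the follower set graph of $Y$. Then the future cover $(\mathbb K(Y),L_{\mathbb K(Y)})$ of $Y$ is isomorphic, as a labeled graph, to $(G_{reg},\mathcal L)$.
   Context: Let $Y\subseteq A^{\mathbb Z}$ be a sofic shift, $Y[0,\infty)=\{y_{[0,\infty)}:y\in Y\}$, $\mathbb W(Y)$ its set of words. For a word $w$ let $F(w)=\{z\in Y[0,\infty): wz\in Y[0,\infty)\}$, and for $y\in Y$ let $F(y)=\{z\in Y[0,\infty): y_{(-\infty,-1]}z\in Y\}$. The follower set graph $(G,\mathcal L)$ (as in Lind–Marcus) has as vertices the distinct sets $F(w)$, $w$ a word of $Y$, and an edge labeled $a$ from $F(w)$ to $F(wa)$ whenever $wa\in\mathbb W(Y)$ (one edge per vertex pair and label). For a labeled graph $(H,L_H)$ with edge shift $X_H$, follower set of a vertex: $f_H(v)=\{L_H(x): x$ a right-infinite path starting at $v\}$. A vertex $v$ is regular if there is a bi-infinite path $z\in X_H$ such that the edge $z_{-1}$ ends at $v$ and $f_H(v)=F(L_H(z))$. For right-resolving $(H,L_H)$ (distinct edges with common source have distinct labels), $(H_{reg},L_H)$ is the labeled subgraph whose vertices are the regular vertices and whose edges are the edges with source a regular vertex. The future cover $(\mathbb K(Y),L_{\mathbb K(Y)})$ is the labeled graph with vertices the distinct sets $F(y)$, $y\in Y$, and an edge labeled $a\in A$ from $F(y)$ to $F(z)$ exactly when $F(z)=\{w\in A^{\mathbb N}: aw\in F(y)\}$ (one edge per such pair and label). *)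

From Stdlib Require Import ZArith.
From mathcomp Require Import ssreflect ssrfun ssrbool eqtype ssrnat seq fintype.

Set Implicit Arguments.
Unset Strict Implicit.
Unset Printing Implicit Defensive.

Section Shifts.
Variable A : finType.

Definition biseq := Z -> A.
Definition rseq := nat -> A.

Definition sofic (Y : biseq -> Prop) : Prop :=
  exists (V E : finType) (s t : E -> V) (l : E -> A),
    forall y : biseq,
      Y y <-> exists p : Z -> E,
                (forall i : Z, t (p i) = s (p (i + 1)%Z)) /\
                (forall i : Z, y i = l (p i)).

Definition rays (Y : biseq -> Prop) : rseq -> Prop :=
  fun z => exists y, Y y /\ forall n : nat, z n = y (Z.of_nat n).

Definition occurs_at (w : seq A) (y : biseq) (i : Z) : Prop :=
  forall k : nat, k < size w -> y (i + Z.of_nat k)%Z = nth (y i) w k.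

Definition words (Y : biseq -> Prop) (w : seq A) : Prop :=
  exists y, Y y /\ exists i, occurs_at w y i.

Definition catw (w : seq A) (z : rseq) : rseq :=
  fun n => if n < size w then nth (z 0) w n else z (n - size w).

Definition consr (a : A) (z : rseq) : rseq :=
  fun n => match n with 0 => a | n'.+1 => z n' end.

Definition glue (y : biseq) (z : rseq) : biseq :=
  fun i => if (i <? 0)%Z then y i else z (Z.to_nat i).

Definition Fw (Y : biseq -> Prop) (w : seq A) : rseq -> Prop :=
  fun z => rays Y z /\ rays Y (catw w z).

Definition Fy (Y : biseq -> Prop) (y : biseq) : rseq -> Prop :=
  fun z => rays Y z /\ Y (glue y z).

End Shifts.

Record lgraph (A : Type) := LGraph {
  vert : Type;
  edge : Type;
  src : edge -> vert;
  tgt : edge -> vert;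
  lab : edge -> A
}.
Arguments vert {A}.
Arguments edge {A}.
Arguments src {A G} : rename.
Arguments tgt {A G} : rename.
Arguments lab {A G} : rename.

Section Graphs.
Variable A : finType.
Variable Y : biseq A -> Prop.

(* Follower set graph: vertices are the distinct sets F(w), w in W(Y); one edge
   labeled a from F(w) to F(wa) whenever wa in W(Y). *)
Definition fsg_vert := {S : rseq A -> Prop | exists w, words Y w /\ S = Fw Y w}.
Definition fsg_edge :=
  {t : fsg_vert * A * fsg_vert |
     exists w, words Y (rcons w t.1.2) /\
               sval t.1.1 = Fw Y w /\ sval t.2 = Fw Y (rcons w t.1.2)}.
Definition follower_set_graph : lgraph A :=
  @LGraph A fsg_vert fsg_edge
    (fun e => (sval e).1.1) (fun e => (sval e).2) (fun e => (sval e).1.2).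

(* Future cover: vertices the distinct sets F(y), y in Y; an edge labeled a from
   F(y) to F(z) exactly when F(z) = {w | a w in F(y)}. *)
Definition fc_vert := {S : rseq A -> Prop | exists y, Y y /\ S = Fy Y y}.
Definition fc_edge :=
  {t : fc_vert * A * fc_vert |
     sval t.2 = (fun w => sval t.1.1 (consr t.1.2 w))}.
Definition future_cover : lgraph A :=
  @LGraph A fc_vert fc_edge
    (fun e => (sval e).1.1) (fun e => (sval e).2) (fun e => (sval e).1.2).

Definition fH (H : lgraph A) (v : vert H) : rseq A -> Prop :=
  fun x => exists p : nat -> edge H,
    src (p 0) = v /\ (forall n, tgt (p n) = src (p n.+1)) /\
    (forall n, x n = lab (p n)).

Definition regular (H : lgraph A) (v : vert H) : Prop :=
  exists z : Z -> edge H,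
    (forall i : Z, tgt (z i) = src (z (i + 1)%Z)) /\
    tgt (z (-1)%Z) = v /\
    fH v = Fy Y (fun i => lab (z i)).

End Graphs.

Definition iso_to_subgraph (A : Type) (G1 G2 : lgraph A)
    (PV : vert G2 -> Prop) (PE : edge G2 -> Prop) : Prop :=
  exists (phi : vert G1 -> vert G2) (psi : edge G1 -> edge G2),
    injective phi /\ (forall v, PV v <-> exists u, phi u = v) /\
    injective psi /\ (forall e, PE e <-> exists d, psi d = e) /\
    (forall d, src (psi d) = phi (src d) /\ tgt (psi d) = phi (tgt d) /\
               lab (psi d) = lab d).

Arguments regular {A} Y H v.
Arguments fH {A} H v.
Arguments iso_to_subgraph {A} G1 G2 PV PE.

(* The identity F(y) |-> F(y) embeds the future cover into the follower set
   graph. It is well defined because in a sofic shift F(y) = F(y_{[-N,-1]}) for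
   N large: the vertices of a presentation at which a path reading y_{[-n,-1]}
   can end form a decreasing family of subsets of a finite set. In the follower
   set graph the follower set of the vertex F(w) is F(w) itself, and since a
   sofic shift is compact (Koenig's lemma on the finite edge set) the label of
   every bi-infinite path lies in Y; hence the regular vertices are exactly the
   sets F(y), the point y itself labelling a path that ends at F(y). The edge
   labelled a out of F(y) goes to {z | a z in F(y)}, which is F of the shift of
   the point y_{(-oo,-1]} a z0, so it comes from the future cover. *)

From Stdlib Require Import ZArith Lia Classical IndefiniteDescription ProofIrrelevance.
From Stdlib Require Import FunctionalExtensionality PropExtensionality.
From mathcomp Require Import ssreflect ssrfun ssrbool eqtype ssrnat seq fintype.
From mathcomp Require Import zify.

Set Implicit Arguments.
Unset Strict Implicit.
Unset Printing Implicit Defensive.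

Lemma sval_inj (T : Type) (P : T -> Prop) : injective (@sval T P).
Proof. exact: eq_sig_hprop (fun x => @proof_irrelevance (P x)). Qed.

Section AntitoneFamilies.
Variables (T : finType) (P : nat -> T -> Prop).
Hypothesis P_antitone : forall m n v, m <= n -> P n v -> P m v.

Lemma fin_antitone_stable : exists N, forall v, P N v -> forall n, P n v.
Proof.
suff [N HN] : exists N, forall v, v \in enum T -> P N v -> forall n, P n v.
  by exists N => v; apply: HN; rewrite mem_enum.
elim: (enum T) => [|v vs [N HN]]; first by exists 0.
have [Pv | /not_all_ex_not [n0 Pn0v]] := classic (forall n, P n v).
  by exists N => u; rewrite inE => /predU1P [-> //|]; apply: HN.
exists (maxn N n0) => u; rewrite inE => /predU1P [-> Pv | vs_u Pu].
  by case: Pn0v; apply: P_antitone Pv; apply: leq_maxr.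
by apply: HN => //; apply: P_antitone Pu; apply: leq_maxl.
Qed.

Lemma fin_antitone_meet : (forall n, exists v, P n v) -> exists v, forall n, P n v.
Proof.
have [N HN] := fin_antitone_stable.
by move=> /(_ N) [v Pv]; exists v; apply: HN.
Qed.

End AntitoneFamilies.

Lemma dependent_choice (T : Type) (Q : nat -> T -> Prop) (S : nat -> T -> T -> Prop) x0 :
  Q 0 x0 -> (forall n x, Q n x -> exists y, Q n.+1 y /\ S n x y) ->
  exists g : nat -> T, g 0 = x0 /\ forall n, Q n (g n) /\ S n (g n) (g n.+1).
Proof.
move=> Q0 step.
have next n (x : {x | Q n x}) : {y : {y | Q n.+1 y} | S n (sval x) (sval y)}.
  apply: constructive_indefinite_description.
  have [y [Qy Sxy]] := step n _ (svalP x); by exists (exist _ y Qy).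
pose g := fix g n : {x | Q n x} :=
  match n return {x | Q n x} with 0 => exist _ x0 Q0 | n.+1 => sval (next n (g n)) end.
exists (fun n => sval (g n)); split=> // n.
by split; [apply: svalP | apply: (svalP (next n (g n)))].
Qed.

Section KonigZ.
Variables (T : finType) (R : Z -> T -> T -> Prop) (P : Z -> T -> Prop).

Definition window_solution (n : nat) (q : Z -> T) :=
  (forall j, (- Z.of_nat n <= j < Z.of_nat n)%Z -> R j (q j) (q (j + 1)%Z)) /\
  (forall j, (- Z.of_nat n <= j <= Z.of_nat n)%Z -> P j (q j)).

Hypothesis windows_solvable : forall n, exists q, window_solution n q.

Lemma window_solution_le m n q : m <= n -> window_solution n q -> window_solution m q.
Proof. by move=> le_mn [qR qP]; split=> j hj; [apply: qR | apply: qP]; lia. Qed.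

Definition extendable (i : Z) (e : T) :=
  forall n, exists2 q, window_solution n q & q i = e.

Lemma extendable_exists i : exists e, extendable i e.
Proof.
apply: fin_antitone_meet => [m n e le_mn [q hq qi] | n].
  by exists q => //; apply: window_solution_le le_mn hq.
by have [q hq] := windows_solvable n; exists (q i); exists q.
Qed.

Lemma extendable_pointwise i e : extendable i e -> P i e.
Proof. by case/(_ (Z.abs_nat i)) => q [_ qP] <-; apply: qP; lia. Qed.

Lemma extendable_pair i e k : extendable i e ->
  exists e', forall n, exists q, [/\ window_solution n q, q i = e & q k = e'].
Proof.
move=> ext_e; apply: fin_antitone_meet => [m n e' le_mn [q [hq qi qk]] | n].
  by exists q; split=> //; apply: window_solution_le le_mn hq.
by have [q hq qi] := ext_e n; exists (q k), q.
Qed.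

Lemma extendable_succ i e :
  extendable i e -> exists e', extendable (i + 1) e' /\ R i e e'.
Proof.
move=> /(extendable_pair (i + 1)) [e' He']; exists e'; split.
  by move=> n; have [q [hq _ qk]] := He' n; exists q.
have [q [[qR _] <- <-]] := He' (Z.abs_nat i + 1); apply: qR; lia.
Qed.

Lemma extendable_pred i e :
  extendable i e -> exists e', extendable (i - 1) e' /\ R (i - 1) e' e.
Proof.
move=> /(extendable_pair (i - 1)) [e' He']; exists e'; split.
  by move=> n; have [q [hq _ qk]] := He' n; exists q.
have [q [[qR _] <- <-]] := He' (Z.abs_nat i + 1).
by rewrite -{3}(Z.sub_add 1 i); apply: qR; lia.
Qed.

Theorem konig_Z :
  exists q : Z -> T, (forall j, R j (q j) (q (j + 1)%Z)) /\ (forall j, P j (q j)).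
Proof.
have [e0 ext0] := extendable_exists 0.
have [|g [g0 hg]] := @dependent_choice _ (fun n => extendable (Z.of_nat n))
    (fun n e e' => R (Z.of_nat n) e e') e0 ext0.
  by move=> n e /extendable_succ; rewrite Nat2Z.inj_succ.
have [|h [h0 hh]] := @dependent_choice _ (fun n => extendable (- Z.of_nat n))
    (fun n e e' => R (- Z.of_nat n.+1) e' e) e0 ext0.
  by move=> n e /extendable_pred; rewrite Nat2Z.inj_succ Z.opp_succ -Z.sub_1_r.
pose q j := if (j <? 0)%Z then h (Z.to_nat (- j)) else g (Z.to_nat j).
have qP n : q (Z.of_nat n) = g n.
  by rewrite /q; case: Z.ltb_spec => ?; [lia | rewrite Nat2Z.id].
have qN n : q (- Z.of_nat n)%Z = h n.
  rewrite /q; case: Z.ltb_spec => ?; first by rewrite Z.opp_involutive Nat2Z.id.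
  have -> : n = 0 by lia.
  by rewrite /= g0 h0.
have Zcases j : (exists n, j = Z.of_nat n) \/ (exists n, j = - Z.of_nat n.+1)%Z.
  case: (Z.le_gt_cases 0 j) => hj.
    by left; exists (Z.to_nat j); lia.
  by right; exists (Z.to_nat (- j - 1)); lia.
have ext_q j : extendable j (q j).
  by case: (Zcases j) => -[n ->]; rewrite ?qP ?qN; [case: (hg n) | case: (hh n.+1)].
exists q; split=> j; last exact: extendable_pointwise (ext_q j).
case: (Zcases j) => -[n ->].
  by rewrite (_ : Z.of_nat n + 1 = Z.of_nat n.+1)%Z ?qP; [case: (hg n) | lia].
by rewrite (_ : - Z.of_nat n.+1 + 1 = - Z.of_nat n)%Z ?qN; [case: (hh n) | lia].
Qed.

End KonigZ.

Section Sequences.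
Variable A : finType.
Implicit Types (w : seq A) (z : rseq A) (y : biseq A) (a : A).

Lemma catw_nil z : catw [::] z = z.
Proof. by apply: functional_extensionality => n; rewrite /catw /= subn0. Qed.

Lemma catw_rcons w a z : catw (rcons w a) z = catw w (consr a z).
Proof.
apply: functional_extensionality => n; rewrite /catw size_rcons nth_rcons.
case: (ltngtP n (size w)) => h.
- by rewrite ltnS ltnW //; apply: set_nth_default.
- by rewrite ltnS leqNgt h /= (_ : n - size w = (n - (size w).+1).+1) //; lia.
- by rewrite h ltnSn subnn.
Qed.

Lemma catw_drop w z : (fun n => catw w z (n + size w)) = z.
Proof. by apply: functional_extensionality => n; rewrite /catw ltnNge leq_addl /= addnK. Qed.

Lemma consr_drop a z : (fun n => consr a z (n + 1)) = z.
Proof. by apply: functional_extensionality => n; rewrite addn1. Qed.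

Lemma catw_mkseq w x n d k :
  k < size w + n -> nth d (w ++ mkseq x n) k = catw w x k.
Proof.
move=> hk; rewrite nth_cat /catw; case: ifP => h; first exact: set_nth_default.
by rewrite nth_mkseq //; lia.
Qed.

Lemma catw_catw_mkseq w x n z k :
  k < size w + n -> catw w (catw (mkseq x n) z) k = catw w x k.
Proof.
move=> hk; rewrite /catw; case: ifP => h; first exact: set_nth_default.
by rewrite size_mkseq ifT ?nth_mkseq //; lia.
Qed.

Lemma glue_nonneg y z n : glue y z (Z.of_nat n) = z n.
Proof. by rewrite /glue; case: Z.ltb_spec => h; [lia | rewrite Nat2Z.id]. Qed.

Lemma glue_consr y z j :
  glue y (consr (y 0%Z) z) j = glue (fun i => y (i + 1)%Z) z (j - 1)%Z.
Proof.
rewrite /glue; case: (Z.ltb_spec j 0) => h1; case: (Z.ltb_spec (j - 1) 0) => h2.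
- by congr y; lia.
- lia.
- by have -> : j = 0%Z by lia.
- by have -> : Z.to_nat j = (Z.to_nat (j - 1)).+1 by lia.
Qed.

Definition past y n : seq A := mkseq (fun k => y (Z.of_nat k - Z.of_nat n)%Z) n.

End Sequences.

Section ShiftSpaces.
Variables (A : finType) (Y : biseq A -> Prop).
Implicit Types (w : seq A) (z r : rseq A) (y : biseq A) (a : A).

Definition shift_invariant := forall k y, Y y -> Y (fun i => y (i + k)%Z).

(* For subsets of the compact space A^Z this is equivalent to being closed. *)
Definition compact := forall (D : Z -> Prop) (x : biseq A),
  (forall n : nat, exists y, Y y /\
     forall j, (- Z.of_nat n <= j <= Z.of_nat n)%Z -> D j -> y j = x j) ->
  exists y, Y y /\ forall j, D j -> y j = x j.

Lemma rays_words w z : rays Y (catw w z) -> words Y w.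
Proof.
case=> y [hy hr]; exists y; split=> //; exists 0%Z => k hk.
by rewrite Z.add_0_l -hr /catw hk; apply: set_nth_default.
Qed.

Lemma past_word y n : Y y -> words Y (past y n).
Proof.
move=> hy; exists y; split=> //; exists (- Z.of_nat n)%Z => k.
by rewrite size_mkseq => hk; rewrite nth_mkseq //; congr y; lia.
Qed.

Lemma Fy_glue y z : Fy Y y z <-> Y (glue y z).
Proof.
split=> [[] //|hg]; split=> //.
by exists (glue y z); split=> // n; rewrite glue_nonneg.
Qed.

Lemma Fy_past_eq y y' : (forall j, (j < 0)%Z -> y j = y' j) -> Fy Y y = Fy Y y'.
Proof.
move=> eq_neg; apply: functional_extensionality => z; rewrite /Fy.
congr (_ /\ Y _); apply: functional_extensionality => j.
by rewrite /glue; case: Z.ltb_spec => // /eq_neg.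
Qed.

Section ShiftInvariant.
Hypothesis Y_shift : shift_invariant.

Lemma shift_invariant_ext k y y' : Y y -> (forall i, y' i = y (i + k)%Z) -> Y y'.
Proof. by move=> hy /functional_extensionality ->; apply: Y_shift. Qed.

Lemma rays_drop r k : rays Y r -> rays Y (fun n => r (n + k)).
Proof.
case=> y [hy hr]; exists (fun i => y (i + Z.of_nat k)%Z); split; first exact: Y_shift.
by move=> n; rewrite hr; congr y; lia.
Qed.

Lemma rays_catw w z : rays Y (catw w z) -> rays Y z.
Proof. by move/(rays_drop (size w)); rewrite catw_drop. Qed.

Lemma rays_consr a z : rays Y (consr a z) -> rays Y z.
Proof. by move/(rays_drop 1); rewrite consr_drop. Qed.

Lemma Fw_rcons w a : Fw Y (rcons w a) = fun z => Fw Y w (consr a z).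
Proof.
apply: functional_extensionality => z; apply: propositional_extensionality.
rewrite /Fw catw_rcons; split=> -[h1 h2]; split=> //.
  exact: rays_catw h2.
exact: rays_consr h1.
Qed.

Lemma words_Fw w : words Y w -> exists z, Fw Y w z.
Proof.
case=> y [hy [i hi]]; exists (fun n => y (i + Z.of_nat (size w + n))%Z); split.
  exists (fun j => y (j + (i + Z.of_nat (size w)))%Z); split; first exact: Y_shift.
  by move=> n; congr y; lia.
exists (fun j => y (j + i))%Z; split; first exact: Y_shift.
move=> n; rewrite /catw; case: ifP => h; last by congr y; lia.
by rewrite (set_nth_default (y i)) // -hi //; congr y; lia.
Qed.

Lemma Fy_future y : Y y -> Fy Y y (fun n => y (Z.of_nat n)).
Proof.
move=> hy; apply/Fy_glue; apply: (shift_invariant_ext (k := 0%Z) hy) => j.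
by rewrite /glue Z.add_0_r; case: Z.ltb_spec => // h; congr y; lia.
Qed.

Lemma Fy_shift y : Fy Y (fun j => y (j + 1)%Z) = fun z => Fy Y y (consr (y 0%Z) z).
Proof.
apply: functional_extensionality => z; apply: propositional_extensionality.
rewrite !Fy_glue; split=> h.
  by apply: (shift_invariant_ext (k := (-1)%Z) h) => j; rewrite glue_consr; congr glue; lia.
by apply: (shift_invariant_ext (k := 1%Z) h) => j; rewrite glue_consr; congr glue; lia.
Qed.

Lemma Fy_sub_Fw_past y n z : Fy Y y z -> Fw Y (past y n) z.
Proof.
case=> hz hg; split=> //.
exists (fun i => glue y z (i - Z.of_nat n)%Z); split.
  by apply: (shift_invariant_ext (k := (- Z.of_nat n)%Z) hg) => i; congr glue; lia.
move=> k; rewrite /catw size_mkseq /glue; case: ifP => h.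
  by rewrite nth_mkseq //; case: Z.ltb_spec => h'; [|lia].
by case: Z.ltb_spec => h'; [lia | congr z; lia].
Qed.

Notation FG := (follower_set_graph Y).

Lemma follower_set_graph_tgt (e : edge FG) :
  sval (tgt e) = fun z => sval (src e) (consr (lab e) z).
Proof. by case: e => [[[u a] v] [w [hw [/= hu ->]]]]; rewrite Fw_rcons hu. Qed.

Lemma follower_set_graph_vert_nonempty (v : vert FG) : exists z, sval v z.
Proof. by have [w [hw ->]] := svalP v; apply: words_Fw. Qed.

Section Compact.
Hypothesis Y_compact : compact.

Lemma compact_closed x :
  (forall n : nat, exists y, Y y /\
     forall j, (- Z.of_nat n <= j <= Z.of_nat n)%Z -> y j = x j) ->
  Y x.
Proof.
move=> approx; have [|y [hy eq_yx]] := Y_compact (D := fun _ => True) (x := x).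
  by move=> n; have [y [hy eq_yx]] := approx n; exists y; split=> // j /eq_yx.
by have <- : y = x by apply: functional_extensionality => j; apply: eq_yx.
Qed.

Lemma rays_closed r :
  (forall n, exists r', rays Y r' /\ forall k, k < n -> r' k = r k) -> rays Y r.
Proof.
move=> approx.
have [|y [hy eq_yr]] := Y_compact (D := fun j => (0 <= j)%Z) (x := fun j => r (Z.to_nat j)).
  move=> n; have [r' [[y [hy hr]] eq_r'r]] := approx n.+1; exists y; split=> // j hj hd.
  by rewrite -(Z2Nat.id j hd) Nat2Z.id -hr eq_r'r //; lia.
by exists y; split=> // n; rewrite eq_yr ?Nat2Z.id //; lia.
Qed.

Lemma fH_follower_set_graph_sub (v : vert FG) x : fH FG v x -> sval v x.
Proof.
(* The n-th vertex of the path is F(w x_{[0,n)}), which is nonempty; compactness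
   then puts w x itself in Y[0,oo). *)
case=> p [p0 [p_path p_lab]].
have src_p n : sval (src (p n)) = fun z => sval v (catw (mkseq x n) z).
  elim: n => [|n IH].
    by rewrite p0; apply: functional_extensionality => z; rewrite catw_nil.
  rewrite -p_path follower_set_graph_tgt IH; apply: functional_extensionality => z.
  by rewrite mkseqS catw_rcons p_lab.
have [w [hw hv]] := svalP v.
have wx_ray : rays Y (catw w x).
  apply: rays_closed => n; have [z] := follower_set_graph_vert_nonempty (src (p n)).
  rewrite src_p hv => -[_ ray_wxz].
  by exists (catw w (catw (mkseq x n) z)); split=> // k hk; apply: catw_catw_mkseq; lia.
by change (sval v x); rewrite hv; split=> //; apply: rays_catw wx_ray.
Qed.

Lemma fH_follower_set_graph_sup (v : vert FG) x : sval v x -> fH FG v x.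
Proof.
have [w [hw hv]] := svalP v; rewrite hv => -[_ wx_ray].
have words_wx n : words Y (w ++ mkseq x n).
  case: wx_ray => y [hy hr]; exists y; split=> //; exists 0%Z => k.
  by rewrite size_cat size_mkseq => hk; rewrite Z.add_0_l -hr catw_mkseq.
have words_wxx n : words Y (rcons (w ++ mkseq x n) (x n)).
  by rewrite rcons_cat -mkseqS; apply: words_wx.
pose vx u (hu : words Y u) : vert FG := exist _ (Fw Y u) (ex_intro _ u (conj hu erefl)).
pose p n : edge FG := exist _ (vx _ (words_wx n), x n, vx _ (words_wxx n))
   (ex_intro _ (w ++ mkseq x n) (conj (words_wxx n) (conj erefl erefl))).
exists p; split; last split=> // n.
  by apply: sval_inj; rewrite /= cats0 hv.
by apply: sval_inj; rewrite /= mkseqS rcons_cat.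
Qed.

Lemma fH_follower_set_graph (v : vert FG) : fH FG v = sval v.
Proof.
apply: functional_extensionality => x; apply: propositional_extensionality.
by split; [apply: fH_follower_set_graph_sub | apply: fH_follower_set_graph_sup].
Qed.

Lemma follower_set_graph_path_label (p : Z -> edge FG) :
  (forall i, tgt (p i) = src (p (i + 1)%Z)) -> Y (fun i => lab (p i)).
Proof.
move=> p_path; apply: compact_closed => n.
have tail_fH :
    fH FG (src (p (- Z.of_nat n)%Z)) (fun k => lab (p (- Z.of_nat n + Z.of_nat k)%Z)).
  exists (fun k => p (- Z.of_nat n + Z.of_nat k)%Z); split; first by rewrite Z.add_0_r.
  by split=> // k; rewrite p_path; congr (src (p _)); lia.
move: (fH_follower_set_graph_sub tail_fH); have [w [_ ->]] := svalP (src (p (- Z.of_nat n)%Z)).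
case=> -[y [hy hr]] _; exists (fun j => y (j + Z.of_nat n)%Z); split; first exact: Y_shift.
move=> j hj; rewrite -(Z2Nat.id (j + Z.of_nat n)); last lia.
by rewrite -hr; congr (lab (p _)); lia.
Qed.

End Compact.
End ShiftInvariant.
End ShiftSpaces.

Section Presentation.
Variables (A V E : finType) (s t : E -> V) (l : E -> A) (Y : biseq A -> Prop).

Definition is_path (p : Z -> E) := forall i, t (p i) = s (p (i + 1)%Z).

Hypothesis Y_presented : forall y, Y y <-> exists p, is_path p /\ forall i, y i = l (p i).

Lemma presented_shift_invariant : shift_invariant Y.
Proof.
move=> k y /Y_presented [p [p_path p_lab]]; apply/Y_presented.
exists (fun i => p (i + k)%Z); split=> // i.
by rewrite p_path; congr (s (p _)); lia.
Qed.

Lemma presented_compact : compact Y.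
Proof.
move=> D x approx.
have [|p [p_path p_lab]] :=
  konig_Z (R := fun _ e e' => t e = s e') (P := fun i e => D i -> x i = l e).
  move=> n; have [y [/Y_presented [p [p_path p_lab]] eq_yx]] := approx n.
  by exists p; split=> j hj => [|hD]; [apply: p_path | rewrite -eq_yx // p_lab].
exists (fun i => l (p i)); split; first by apply/Y_presented; exists p.
by move=> j /p_lab.
Qed.

Lemma is_path_splice p q : is_path p -> is_path q -> s (q 0%Z) = s (p 0%Z) ->
  is_path (fun j => if (j <? 0)%Z then q j else p j).
Proof.
move=> p_path q_path q0 j.
case: (Z.ltb_spec j 0) => hj; case: (Z.ltb_spec (j + 1) 0) => hj1 //; last lia.
by rewrite q_path (_ : (j + 1 = 0)%Z) //; lia.
Qed.

Definition past_vertex (y : biseq A) (n : nat) (v : V) := exists2 p, is_path p &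
  (forall j, (- Z.of_nat n <= j < 0)%Z -> y j = l (p j)) /\ s (p 0%Z) = v.

Lemma past_vertex_le y m n v : m <= n -> past_vertex y n v -> past_vertex y m v.
Proof.
by move=> le_mn [p p_path [p_lab p0]]; exists p => //; split=> // j hj; apply: p_lab; lia.
Qed.

Lemma glue_presented y z p : is_path p ->
  (forall m, past_vertex y m (s (p 0%Z))) -> (forall n, z n = l (p (Z.of_nat n))) ->
  Y (glue y z).
Proof.
move=> p_path past p_lab; apply: (compact_closed presented_compact) => m.
have [q q_path [q_lab q0]] := past m.
exists (fun j => l (if (j <? 0)%Z then q j else p j)); split.
  apply/Y_presented; exists (fun j => if (j <? 0)%Z then q j else p j).
  by split=> //; apply: is_path_splice.
move=> j hj; rewrite /glue; case: Z.ltb_spec => hj0; first by rewrite q_lab //; lia.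
by rewrite p_lab Z2Nat.id.
Qed.

Lemma presented_Fy_word y : Y y -> exists w, words Y w /\ Fy Y y = Fw Y w.
Proof.
(* Past the stabilisation index N, any z following y_{[-N,-1]} leaves a vertex
   reached by paths reading arbitrarily long pasts of y. *)
move=> hy; have [N stableN] := fin_antitone_stable (@past_vertex_le y).
exists (past y N); split; first exact: past_word.
apply: functional_extensionality => z; apply: propositional_extensionality; split.
  exact: (Fy_sub_Fw_past presented_shift_invariant).
case=> _ [x [/Y_presented [p [p_path p_lab]] eq_x]].
pose pN j := p (j + Z.of_nat N)%Z.
have pN_path : is_path pN by move=> i; rewrite /pN p_path; congr (s (p _)); lia.
have pN_lab j :
    (- Z.of_nat N <= j)%Z -> catw (past y N) z (Z.to_nat (j + Z.of_nat N)) = l (pN j).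
  by move=> hj; rewrite eq_x -p_lab Z2Nat.id //; lia.
apply/Fy_glue; apply: (glue_presented pN_path) => [m|n].
  apply: stableN; exists pN => //; split=> // j hj; rewrite -pN_lab; last lia.
  by rewrite /catw size_mkseq ifT ?nth_mkseq; [congr y|..]; lia.
by rewrite -pN_lab; [rewrite /catw size_mkseq ifF; [congr z|]|]; lia.
Qed.

End Presentation.

Section FutureCoverEmbedding.
Variables (A : finType) (Y : biseq A -> Prop).
Hypotheses (Y_shift : shift_invariant Y) (Y_compact : compact Y).
Hypothesis Fy_word : forall y, Y y -> exists w, words Y w /\ Fy Y y = Fw Y w.

Notation FG := (follower_set_graph Y).
Notation FC := (future_cover Y).

Lemma future_cover_vert_word (u : fc_vert Y) : exists w, words Y w /\ sval u = Fw Y w.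
Proof. by have [y [hy ->]] := svalP u; apply: Fy_word. Qed.

Definition fc_to_fsg_vert (u : fc_vert Y) : fsg_vert Y :=
  exist _ (sval u) (future_cover_vert_word u).

Lemma fc_to_fsg_edge_proof (d : fc_edge Y) : exists w,
  words Y (rcons w (sval d).1.2) /\ sval (fc_to_fsg_vert (sval d).1.1) = Fw Y w /\
  sval (fc_to_fsg_vert (sval d).2) = Fw Y (rcons w (sval d).1.2).
Proof.
case: d => [[[u a] v] /= v_succ].
have [w [hw hu]] := future_cover_vert_word u.
have hv : sval v = Fw Y (rcons w a) by rewrite v_succ (Fw_rcons Y_shift) hu.
exists w; split=> //; have [y [hy hvy]] := svalP v.
by move: (Fy_future Y_shift hy); rewrite -hvy hv => -[_ /rays_words].
Qed.

Definition fc_to_fsg_edge (d : fc_edge Y) : fsg_edge Y :=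
  exist _ (fc_to_fsg_vert (sval d).1.1, (sval d).1.2, fc_to_fsg_vert (sval d).2)
    (fc_to_fsg_edge_proof d).

Lemma fc_to_fsg_vert_inj : injective fc_to_fsg_vert.
Proof. by move=> u1 u2 /(f_equal sval) eq_u; apply: sval_inj. Qed.

Lemma fc_to_fsg_edge_inj : injective fc_to_fsg_edge.
Proof.
move=> [[[u1 a1] v1] p1] [[[u2 a2] v2] p2] /(f_equal sval) /= [eq_u eq_a eq_v].
by apply: sval_inj; rewrite /= (sval_inj eq_u) eq_a (sval_inj eq_v).
Qed.

Lemma future_cover_path y : Y y -> exists p : Z -> edge FC,
  [/\ forall i, tgt (p i) = src (p (i + 1)%Z), forall i, lab (p i) = y i
    & sval (tgt (p (-1)%Z)) = Fy Y y].
Proof.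
move=> hy; pose yi i j := y (j + i)%Z.
pose u i : fc_vert Y := exist _ (Fy Y (yi i)) (ex_intro _ (yi i) (conj (Y_shift i hy) erefl)).
have u_succ i : Fy Y (yi (i + 1)%Z) = fun z => Fy Y (yi i) (consr (y i) z).
  have := Fy_shift Y_shift (yi i); rewrite /yi Z.add_0_l => <-; congr Fy.
  by apply: functional_extensionality => j; congr y; lia.
exists (fun i => exist _ (u i, y i, u (i + 1)%Z) (u_succ i) : fc_edge Y); split=> //=.
by rewrite /yi; congr Fy; apply: functional_extensionality => j; rewrite Z.add_0_r.
Qed.

Lemma future_cover_succ y a z0 : Y y -> Fy Y y (consr a z0) ->
  exists y', Y y' /\ Fy Y y' = fun z => Fy Y y (consr a z).
Proof.
move=> hy /Fy_glue hx; set x := glue y (consr a z0) in hx.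
exists (fun j => x (j + 1)%Z); split; first exact: Y_shift.
rewrite (Fy_shift Y_shift) (@Fy_past_eq _ _ x y) // => j hj.
by rewrite /x /glue; case: Z.ltb_spec => //; lia.
Qed.

Lemma regular_fsg_vert (v : fsg_vert Y) :
  regular Y FG v <-> exists u, fc_to_fsg_vert u = v.
Proof.
split=> [[p [p_path [_ fH_v]]] | [[S [y [hy eq_S]]] <-]].
  rewrite fH_follower_set_graph // in fH_v.
  have hp := follower_set_graph_path_label Y_shift Y_compact p_path.
  by exists (exist _ (sval v) (ex_intro _ _ (conj hp fH_v))); apply: sval_inj.
have [p [p_path p_lab p_end]] := future_cover_path hy.
exists (fun i => fc_to_fsg_edge (p i)); split=> [i|].
  exact: (congr1 fc_to_fsg_vert (p_path i)).
split; first by apply: sval_inj; rewrite /= p_end eq_S.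
rewrite fH_follower_set_graph //= eq_S; congr Fy.
by apply: functional_extensionality => i; rewrite -p_lab.
Qed.

Lemma regular_src_fsg_edge (e : edge FG) :
  regular Y FG (src e) <-> exists d, fc_to_fsg_edge d = e.
Proof.
split=> [|[d <-]]; last by apply/regular_fsg_vert; exists (sval d).1.1.
move/regular_fsg_vert => [[S [y [hy eq_S]]] eq_src].
have u_eq : sval (src e) = Fy Y y by rewrite -eq_src.
have tgt_eq : sval (tgt e) = fun z => Fy Y y (consr (lab e) z).
  by rewrite follower_set_graph_tgt // u_eq.
have [z0] := follower_set_graph_vert_nonempty Y_shift (tgt e).
rewrite tgt_eq => /(future_cover_succ hy) [y' [hy' eq_y']].
pose v : fc_vert Y :=
  exist _ (sval (tgt e)) (ex_intro _ y' (conj hy' (etrans tgt_eq (esym eq_y')))).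
have v_succ : sval v = fun z => S (consr (lab e) z) by rewrite /= tgt_eq eq_S.
exists (exist _ (exist _ S (ex_intro _ y (conj hy eq_S)), lab e, v) v_succ).
have eq_tgt : fc_to_fsg_vert v = tgt e by apply: sval_inj.
apply: sval_inj; rewrite /= eq_src eq_tgt.
by change (((sval e).1.1, (sval e).1.2, (sval e).2) = sval e); case: (sval e) => [[]].
Qed.

Lemma future_cover_iso_regular_subgraph :
  iso_to_subgraph FC FG (regular Y FG) (fun e => regular Y FG (src e)).
Proof.
exists fc_to_fsg_vert, fc_to_fsg_edge.
split; first exact: fc_to_fsg_vert_inj.
split; first exact: regular_fsg_vert.
split; first exact: fc_to_fsg_edge_inj.
by split; first exact: regular_src_fsg_edge.
Qed.

End FutureCoverEmbedding.

Theorem proposition3p16 (A : finType) (Y : biseq A -> Prop) :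
  sofic Y ->
  iso_to_subgraph (future_cover Y) (follower_set_graph Y)
    (regular Y (follower_set_graph Y))
    (fun e => regular Y (follower_set_graph Y) (src e)).
Proof.
case=> V [E [s [t [l Y_presented]]]].
apply: future_cover_iso_regular_subgraph.
- exact: presented_shift_invariant Y_presented.
- exact: presented_compact Y_presented.
- exact: presented_Fy_word Y_presented.
Qed.
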